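(* Let $L\geq 2$ and work in the setting below. Suppose $\sigma\in C^2(\mathbb{R})$ with $|\sigma(z)|\leq M_0$, $|\sigma'(z)|\leq M_1$, $|\sigma''(z)|\leq M_2$ for all $z\in\mathbb{R}$, for some $M_0,M_1,M_2>0$. Let $R>0$ and assume that the parameters $\{W_l\}_{l=1}^L$ and $\{b_l,c_l\}_{l=1}^{L-1}$ (those held fixed in each statement below) all have Frobenius norm at most $R$. Then there exist constants $C_1,\dots,C_L>0$ such that: (i) for each $l=1,\dots,L-1$, regarding $S$ as a function of $c_l$ alone with all other parameters fixed, $$\|\nabla_{c_l}S(\hat c_l)-\nabla_{c_l}S(\tilde c_l)\|_{\mathrm F}\leq C_l\|\hat c_l-\tilde c_l\|_{\mathrm F}\quad\text{for all }\hat c_l,\tilde c_l\in\mathbb{R}^{M\times N};$$ (ii) regarding $S$ as a function of $W_L$ alone with all other parameters fixed, $$\|\nabla_{W_L}S(\hat W_L)-\nabla_{W_L}S(\tilde W_L)\|_{\mathrm F}\leq C_L\|\hat W_L-\tilde W_L\|_{\mathrm F}$$ for all $\hat W_L,\tilde W_L\in\mathbb{R}^{J\times M}$ with $\|\hat W_L\|_{\mathrm F},\|\tilde W_L\|_{\mathrm F}\leq R$.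
   Context: Data: $X\in\mathbb{R}^{d\times N}$, $A\in\mathbb{R}^{J\times N}$ with one-hot columns (entries in $\{0,1\}$, each column summing to $1$), $J\geq 2$. For $\boldsymbol z\in\mathbb{R}^J$ and one-hot $\boldsymbol\alpha$, $\ell(\boldsymbol z,\boldsymbol\alpha)=-\sum_j\alpha_j\ln\big(e^{z_j}/\sum_k e^{z_k}\big)$; for $Z=[\boldsymbol z_1\cdots\boldsymbol z_N]$, $\mathcal{L}_{\mathrm{vec}}(Z,A)=[\ell(\boldsymbol z_n,\boldsymbol\alpha_n)]_{n=1}^N\in\mathbb{R}^N$. Parameters: $W_1\in\mathbb{R}^{M\times d}$, $W_2,\dots,W_{L-1}\in\mathbb{R}^{M\times M}$, $W_L\in\mathbb{R}^{J\times M}$, $b_l\in\mathbb{R}^M$, $c_l\in\mathbb{R}^{M\times N}$ ($l\le L-1$); $\sigma$ acts entrywise; $\mathbf 1\in\mathbb{R}^N$ is the all-ones vector. Weights $\omega_l=\prod_{j=l+1}^L\|W_j\|_{\mathrm F}^2$, and $$S=\|\mathcal{L}_{\mathrm{vec}}(W_L\sigma(c_{L-1}),A)\|_2^2+\sum_{l=2}^{L-1}\omega_l\|W_l\sigma(c_{l-1})+b_l\mathbf 1^\top-c_l\|_{\mathrm F}^2+\omega_1\|W_1X+b_1\mathbf 1^\top-c_1\|_{\mathrm F}^2.$$ $\nabla_{c_l}S$ and $\nabla_{W_L}S$ denote the partial gradients of $S$ (with respect to the Frobenius inner product). *)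

From HB Require Import structures.
From mathcomp Require Import all_boot all_order all_algebra.
From mathcomp Require Import all_classical all_reals all_analysis.
Set Implicit Arguments. Unset Strict Implicit. Unset Printing Implicit Defensive.
Import Order.TTheory GRing.Theory Num.Theory.
Local Open Scope ring_scope.

Section Defs.
Variable R : realType.

Definition frob2 (m n : nat) (A : 'M[R]_(m, n)) : R :=
  \sum_(i < m) \sum_(j < n) (A i j) ^+ 2.
Definition frob (m n : nat) (A : 'M[R]_(m, n)) : R := Num.sqrt (frob2 A).

(* gradient w.r.t. the Frobenius inner product: matrix of partial derivatives *)
Definition mgrad (m n : nat) (f : 'M[R]_(m, n) -> R) (x : 'M[R]_(m, n))
  : 'M[R]_(m, n) :=
  \matrix_(i < m, j < n) derive1 (fun t : R => f (x + t *: delta_mx i j)) 0.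

Definition act (sigma : R -> R) (m n : nat) (A : 'M[R]_(m, n)) : 'M[R]_(m, n) :=
  map_mx sigma A.

Definition bcast (m N : nat) (b : 'cV[R]_m) : 'M[R]_(m, N) :=
  \matrix_(i < m, k < N) b i 0.

Definition xent (J : nat) (z alpha : 'cV[R]_J) : R :=
  - \sum_(j < J) alpha j 0 * ln (expR (z j 0) / \sum_(k < J) expR (z k 0)).

Definition Lvec_sq (J N : nat) (Z A : 'M[R]_(J, N)) : R :=
  \sum_(n < N) (xent (col n Z) (col n A)) ^+ 2.

Definition onehot_cols (J N : nat) (A : 'M[R]_(J, N)) : Prop :=
  (forall j n, A j n = 0 \/ A j n = 1) /\ (forall n, \sum_(j < J) A j n = 1).

(* Weights: W_1 : M x d, W_l (2 <= l <= L-1) : M x M given by Wm l, W_L : J x M.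
   Squared Frobenius norm of W_l (indexed by l). *)
Definition Wn2 (L d M J : nat) (W1 : 'M[R]_(M, d)) (Wm : nat -> 'M[R]_(M, M))
  (WL : 'M[R]_(J, M)) (l : nat) : R :=
  if l == 1%N then frob2 W1 else if l == L then frob2 WL else frob2 (Wm l).

Definition omega (L d M J : nat) (W1 : 'M[R]_(M, d)) (Wm : nat -> 'M[R]_(M, M))
  (WL : 'M[R]_(J, M)) (l : nat) : R :=
  \prod_(l.+1 <= j < L.+1) Wn2 L W1 Wm WL j.

(* The objective S; b l and c l are used for 1 <= l <= L-1 *)
Definition Sobj (sigma : R -> R) (L d M J N : nat)
  (X : 'M[R]_(d, N)) (A : 'M[R]_(J, N))
  (W1 : 'M[R]_(M, d)) (Wm : nat -> 'M[R]_(M, M)) (WL : 'M[R]_(J, M))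
  (b : nat -> 'cV[R]_M) (c : nat -> 'M[R]_(M, N)) : R :=
  Lvec_sq (WL *m act sigma (c L.-1)) A
  + \sum_(2 <= l < L) omega L W1 Wm WL l *
        frob2 (Wm l *m act sigma (c l.-1) + bcast N (b l) - c l)
  + omega L W1 Wm WL 1 * frob2 (W1 *m X + bcast N (b 1%N) - c 1%N).

Definition upd (T : Type) (c : nat -> T) (l : nat) (x : T) : nat -> T :=
  fun k => if k == l then x else c k.

End Defs.

(* Every summand of S is built from the varied parameter by sums, products,
   matrix products, the activation sigma, exp and ln (the softmax loss), with
   all other parameters in a ball of radius R.  Along these operations one
   propagates, uniformly in the fixed parameters, boundedness, Lipschitz
   continuity, and the existence of bounded Lipschitz partial derivatives;
   since the entries of the gradient are these partial derivatives, the
   gradient is Lipschitz.  In c_l the dependence is either through sigma(c_l),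
   which is bounded whatever c_l is, or through a squared distance
   ||... - c_l||^2 with affine gradient, so no bound on c_l is needed.  In W_L
   the weights omega_l are products of ||W_L||^2, which are only controlled on
   the ball, hence the restriction there. *)

From HB Require Import structures.
From mathcomp Require Import all_boot all_order all_algebra.
From mathcomp Require Import all_classical all_reals all_analysis.
From mathcomp Require Import ring lra zify.
Import Order.TTheory GRing.Theory Num.Theory numFieldNormedType.Exports.
Local Open Scope ring_scope.
Set Implicit Arguments. Unset Strict Implicit.

Section Frobenius.
Variable R : realType.

Lemma frob2_ge0 m n (A : 'M[R]_(m, n)) : 0 <= frob2 A.
Proof. by apply: sumr_ge0 => i _; apply: sumr_ge0 => j _; apply: sqr_ge0. Qed.

Lemma frob_ge0 m n (A : 'M[R]_(m, n)) : 0 <= frob A.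
Proof. exact: sqrtr_ge0. Qed.

Lemma frob2E m n (A : 'M[R]_(m, n)) : frob2 A = frob A ^+ 2.
Proof. by rewrite /frob sqr_sqrtr // frob2_ge0. Qed.

Lemma normr_mxE_le_frob m n (A : 'M[R]_(m, n)) i j : `|A i j| <= frob A.
Proof.
rewrite -sqrtr_sqr /frob ler_sqrt ?frob2_ge0 //.
rewrite /frob2 (bigD1 i) //= (bigD1 j) //= -addrA lerDl.
apply: addr_ge0; first by apply: sumr_ge0 => k _; exact: sqr_ge0.
by apply: sumr_ge0 => k _; apply: sumr_ge0 => l _; exact: sqr_ge0.
Qed.

Lemma frob_le_entrywise m n (A : 'M[R]_(m, n)) c :
  0 <= c -> (forall i j, `|A i j| <= c) -> frob A <= (m * n)%:R * c.
Proof.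
move=> c0 Ac; have mn_c0 : 0 <= (m * n)%:R * c by rewrite mulr_ge0.
rewrite -[leRHS]ger0_norm // -sqrtr_sqr /frob ler_sqrt ?sqr_ge0 //.
apply: (@le_trans _ _ (\sum_(i < m) \sum_(j < n) c ^+ 2)).
  apply: ler_sum => i _; apply: ler_sum => j _.
  by rewrite -real_normK ?num_real // lerXn2r ?nnegrE.
rewrite !sumr_const !card_ord -mulrnA exprMn -[c ^+ 2 *+ _]mulr_natl mulnC.
rewrite ler_wpM2r ?sqr_ge0 // -natrX ler_nat.
by case: (m * n)%N => // k; rewrite leq_pmulr.
Qed.

Lemma frob2_le_sqr m n (A : 'M[R]_(m, n)) r : frob A <= r -> `|frob2 A| <= r * r.
Proof.
move=> Ar; rewrite ger0_norm ?frob2_ge0 // frob2E expr2.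
by apply: ler_pM => //; apply: frob_ge0.
Qed.

End Frobenius.

Section RealFunctions.
Variable R : realType.

Lemma lipschitz_of_bounded_derive (f df : R -> R) (S : R -> Prop) (K : R) :
  (forall a b x, S a -> S b -> a <= x <= b -> S x) ->
  (forall x, S x -> is_derive x 1 f (df x)) ->
  (forall x, S x -> `|df x| <= K) ->
  forall a b, S a -> S b -> `|f a - f b| <= K * `|a - b|.
Proof.
move=> convS fdf dfK a b; wlog ab : a b / a <= b.
  move=> hw Sa Sb; have [/hw|/ltW/hw] := leP a b; first exact.
  by rewrite distrC [`|a - b|]distrC; apply.
move=> Sa Sb; have Sx x : a <= x <= b -> S x by exact: convS.
have [c] : exists2 c, c \in `[a, b] & f b - f a = df c * (b - a).
  apply: MVT_segment => // [x|].
    by rewrite in_itv => /andP[/ltW ax /ltW xb]; apply/fdf/Sx; rewrite ax xb.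
  apply: derivable_within_continuous => x; rewrite in_itv => /Sx/fdf.
  by case.
rewrite in_itv => /Sx Sc fab; rewrite distrC fab normrM distrC.
by rewrite ler_wpM2r // dfK.
Qed.

Lemma fin_uniform_bound (T : finType) (Q : T -> R -> Prop) :
  (forall t K K', K <= K' -> Q t K -> Q t K') ->
  (forall t, exists K, Q t K) -> exists K, forall t, Q t K.
Proof.
move=> Qmono /choice [f Qf]; exists (\sum_t `|f t|) => t.
apply: (Qmono t (f t)) => //; apply: le_trans (ler_norm _) _.
by rewrite (bigD1 t) //= lerDl sumr_ge0.
Qed.

End RealFunctions.

Section Families.
Variables (R : realType) (m n : nat) (P : Type) (Dom : 'M[R]_(m, n) -> Prop).
Local Notation fam := (P -> 'M[R]_(m, n) -> R).

(* A family [F p] indexed by the fixed parameters [p : P]; all constants are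
   uniform in [p], and the estimates are only required on [Dom]. *)
Definition ubounded (F : fam) :=
  exists B, forall p x, Dom x -> `|F p x| <= B.
Definition ulipschitz (F : fam) :=
  exists K, forall p x y, Dom x -> Dom y -> `|F p x - F p y| <= K * frob (x - y).
Definition has_partials (F : fam) (D : 'I_m -> 'I_n -> fam) :=
  forall p x i j, Dom x ->
    is_derive (0 : R) (1 : R) (fun t : R => F p (x + t *: delta_mx i j)) (D i j p x).
Definition smooth (F : fam) := exists D, has_partials F D /\ ulipschitz F /\
  forall i j, ubounded (D i j) /\ ulipschitz (D i j).
Definition bsmooth (F : fam) := smooth F /\ ubounded F.
Definition lipgrad (F : fam) :=
  exists D, has_partials F D /\ forall i j, ulipschitz (D i j).

Lemma fam_eq (Q : fam -> Prop) F G : (forall p x, F p x = G p x) -> Q F -> Q G.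
Proof. by move=> FG; rewrite (_ : F = G) //; apply/funext => p; apply/funext. Qed.

Lemma ubounded_ge0 F : ubounded F ->
  exists2 B, 0 <= B & forall p x, Dom x -> `|F p x| <= B.
Proof.
move=> [B FB]; exists `|B| => // p x Dx.
exact: le_trans (FB p x Dx) (ler_norm _).
Qed.

Lemma ulipschitz_ge0 F : ulipschitz F -> exists2 K, 0 <= K &
  forall p x y, Dom x -> Dom y -> `|F p x - F p y| <= K * frob (x - y).
Proof.
move=> [K FK]; exists `|K| => // p x y Dx Dy.
by apply: le_trans (FK p x y Dx Dy) _; rewrite ler_wpM2r ?frob_ge0 ?ler_norm.
Qed.

Lemma ubounded_cst (a : P -> R) B : (forall p, `|a p| <= B) -> ubounded (fun p _ => a p).
Proof. by move=> aB; exists B. Qed.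

Lemma ulipschitz_cst (a : P -> R) : ulipschitz (fun p _ => a p).
Proof. by exists 0 => *; rewrite subrr normr0 mul0r. Qed.

Lemma uboundedD F G : ubounded F -> ubounded G -> ubounded (fun p x => F p x + G p x).
Proof.
move=> [B1 FB] [B2 GB]; exists (B1 + B2) => p x Dx.
by apply: le_trans (ler_normD _ _) _; rewrite lerD ?FB ?GB.
Qed.

Lemma uboundedM F G : ubounded F -> ubounded G -> ubounded (fun p x => F p x * G p x).
Proof.
move=> /ubounded_ge0[B1 B10 FB] /ubounded_ge0[B2 B20 GB]; exists (B1 * B2) => p x Dx.
by rewrite normrM ler_pM ?FB ?GB.
Qed.

Lemma ulipschitzD F G :
  ulipschitz F -> ulipschitz G -> ulipschitz (fun p x => F p x + G p x).
Proof.
move=> [K1 FK] [K2 GK]; exists (K1 + K2) => p x y Dx Dy.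
rewrite opprD addrACA mulrDl; apply: le_trans (ler_normD _ _) _.
by rewrite lerD ?FK ?GK.
Qed.

Lemma ulipschitzM F G : ubounded F -> ubounded G -> ulipschitz F -> ulipschitz G ->
  ulipschitz (fun p x => F p x * G p x).
Proof.
move=> /ubounded_ge0[B1 B10 FB] /ubounded_ge0[B2 B20 GB].
move=> /ulipschitz_ge0[K1 K10 FK] /ulipschitz_ge0[K2 K20 GK].
exists (B1 * K2 + B2 * K1) => p x y Dx Dy.
have -> : F p x * G p x - F p y * G p y =
  F p x * (G p x - G p y) + G p y * (F p x - F p y) by ring.
rewrite mulrDl; apply: le_trans (ler_normD _ _) _; rewrite !normrM -!mulrA.
by rewrite lerD // ler_pM ?FB ?GB ?FK ?GK.
Qed.

Lemma has_partials_cst (a : P -> R) : has_partials (fun p _ => a p) (fun _ _ _ _ => 0).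
Proof. by move=> *; exact: is_derive_cst. Qed.

Lemma has_partials_coord k l :
  has_partials (fun _ x => x k l) (fun i j _ _ => delta_mx i j k l).
Proof.
move=> p x i j _.
have -> : (fun t : R => (x + t *: delta_mx i j) k l) =
  cst (x k l) + delta_mx i j k l *: @id R.
  by apply/funext => t /=; rewrite !mxE mulrC.
by apply: is_derive_eq; rewrite add0r [_ *: _]mulr1.
Qed.

Lemma has_partialsD F G DF DG : has_partials F DF -> has_partials G DG ->
  has_partials (fun p x => F p x + G p x) (fun i j p x => DF i j p x + DG i j p x).
Proof. by move=> FD GD p x i j Dx; exact: is_deriveD (FD p x i j Dx) (GD p x i j Dx). Qed.

Lemma has_partialsM F G DF DG : has_partials F DF -> has_partials G DG ->
  has_partials (fun p x => F p x * G p x)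
               (fun i j p x => F p x * DG i j p x + G p x * DF i j p x).
Proof.
move=> FD GD p x i j Dx.
by have := is_deriveM (FD p x i j Dx) (GD p x i j Dx); rewrite /= scale0r addr0.
Qed.

Lemma has_partials_comp (phi phi' : R -> R) (S : R -> Prop) F D :
  (forall a, S a -> is_derive a 1 phi (phi' a)) ->
  (forall p x, Dom x -> S (F p x)) -> has_partials F D ->
  has_partials (fun p x => phi (F p x)) (fun i j p x => phi' (F p x) * D i j p x).
Proof.
move=> phi_d FS FD p x i j Dx.
have phi_dx : is_derive (F p (x + 0 *: delta_mx i j)) 1 phi (phi' (F p x)).
  by rewrite scale0r addr0; exact/phi_d/FS.
exact: is_derive1_comp phi_dx (FD p x i j Dx).
Qed.

Lemma smooth_cst (a : P -> R) : smooth (fun p _ => a p).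
Proof.
exists (fun _ _ _ _ => 0); split; first exact: has_partials_cst.
split=> [|i j]; first exact: ulipschitz_cst.
by split; [exists 0 => *; rewrite normr0 | exact: (ulipschitz_cst (fun _ => 0))].
Qed.

Lemma bsmooth_cst (a : P -> R) B : (forall p, `|a p| <= B) -> bsmooth (fun p _ => a p).
Proof. by move=> aB; split; [exact: smooth_cst | exact: ubounded_cst aB]. Qed.

Lemma smooth_coord k l : smooth (fun _ x => x k l).
Proof.
exists (fun i j _ _ => delta_mx i j k l); split; first exact: has_partials_coord.
split=> [|i j].
  exists 1 => p x y _ _; rewrite mul1r (_ : x k l - y k l = (x - y) k l).
    exact: normr_mxE_le_frob.
  by rewrite !mxE.
split; last exact: ulipschitz_cst.
by exists 1 => p x _; rewrite mxE; case: (_ && _); rewrite ?normr1 ?normr0.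
Qed.

Lemma bsmooth_coord k l B : (forall x, Dom x -> frob x <= B) -> bsmooth (fun _ x => x k l).
Proof.
move=> DB; split; first exact: smooth_coord.
by exists B => p x Dx; apply: le_trans (DB x Dx); apply: normr_mxE_le_frob.
Qed.

Lemma smoothD F G : smooth F -> smooth G -> smooth (fun p x => F p x + G p x).
Proof.
move=> [DF [FD [FK DFr]]] [DG [GD [GK DGr]]].
exists (fun i j p x => DF i j p x + DG i j p x); split; first exact: has_partialsD.
split=> [|i j]; first exact: ulipschitzD.
have [DFB DFK] := DFr i j; have [DGB DGK] := DGr i j.
by split; [exact: uboundedD | exact: ulipschitzD].
Qed.

Lemma bsmoothD F G : bsmooth F -> bsmooth G -> bsmooth (fun p x => F p x + G p x).
Proof. by move=> [F1 F2] [G1 G2]; split; [exact: smoothD | exact: uboundedD]. Qed.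

Lemma bsmoothM F G : bsmooth F -> bsmooth G -> bsmooth (fun p x => F p x * G p x).
Proof.
move=> [[DF [FD [FK DFr]]] FB] [[DG [GD [GK DGr]]] GB]; split; last exact: uboundedM.
exists (fun i j p x => F p x * DG i j p x + G p x * DF i j p x).
split; first exact: has_partialsM.
split=> [|i j]; first exact: ulipschitzM.
have [DFB DFK] := DFr i j; have [DGB DGK] := DGr i j.
split; first by apply: uboundedD; exact: uboundedM.
by apply: ulipschitzD; exact: ulipschitzM.
Qed.

Lemma bsmoothN F : bsmooth F -> bsmooth (fun p x => - F p x).
Proof.
move=> Fs; apply: (fam_eq (F := fun p x => -1 * F p x)) => [p x|]; first by rewrite mulN1r.
by apply: bsmoothM Fs; apply: (bsmooth_cst (a := fun _ => -1) (B := 1)) => p; rewrite normrN1.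
Qed.

Lemma bsmoothB F G : bsmooth F -> bsmooth G -> bsmooth (fun p x => F p x - G p x).
Proof. by move=> Fs /bsmoothN; exact: bsmoothD. Qed.

Lemma bsmooth_sum (I : eqType) (r : seq I) (F : I -> fam) :
  (forall k, k \in r -> bsmooth (F k)) -> bsmooth (fun p x => \sum_(k <- r) F k p x).
Proof.
elim: r => [|k r IHr] Fs.
  by apply: (fam_eq (F := fun _ _ => 0)) => [p x|]; rewrite ?big_nil //;
    apply: (bsmooth_cst (B := 0)) => p; rewrite normr0.
apply: (fam_eq (F := fun p x => F k p x + \sum_(k <- r) F k p x)) => [p x|].
  by rewrite big_cons.
apply: bsmoothD; first by apply: Fs; rewrite mem_head.
by apply: IHr => k' k'r; apply: Fs; rewrite in_cons k'r orbT.
Qed.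

Lemma bsmooth_prod (I : eqType) (r : seq I) (F : I -> fam) :
  (forall k, k \in r -> bsmooth (F k)) -> bsmooth (fun p x => \prod_(k <- r) F k p x).
Proof.
elim: r => [|k r IHr] Fs.
  by apply: (fam_eq (F := fun _ _ => 1)) => [p x|]; rewrite ?big_nil //;
    apply: (bsmooth_cst (B := 1)) => p; rewrite normr1.
apply: (fam_eq (F := fun p x => F k p x * \prod_(k <- r) F k p x)) => [p x|].
  by rewrite big_cons.
apply: bsmoothM; first by apply: Fs; rewrite mem_head.
by apply: IHr => k' k'r; apply: Fs; rewrite in_cons k'r orbT.
Qed.

Lemma smooth_comp (phi phi' : R -> R) (S : R -> Prop) F K0 K1 K2 :
  0 <= K0 -> 0 <= K1 -> 0 <= K2 ->
  (forall a, S a -> is_derive a 1 phi (phi' a)) ->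
  (forall a b, S a -> S b -> `|phi a - phi b| <= K0 * `|a - b|) ->
  (forall a, S a -> `|phi' a| <= K1) ->
  (forall a b, S a -> S b -> `|phi' a - phi' b| <= K2 * `|a - b|) ->
  (forall p x, Dom x -> S (F p x)) ->
  smooth F -> smooth (fun p x => phi (F p x)).
Proof.
move=> K00 K10 K20 phi_d phiK phi'B phi'K FS [D [FD [FK Dr]]].
exists (fun i j p x => phi' (F p x) * D i j p x).
split; first exact: has_partials_comp FS FD.
have [K K_ge0 {}FK] := ulipschitz_ge0 FK.
split=> [|i j].
  exists (K0 * K) => p x y Dx Dy; rewrite -mulrA.
  by apply: le_trans (phiK _ _ (FS _ _ Dx) (FS _ _ Dy)) _; rewrite ler_wpM2l ?FK.
have [/ubounded_ge0[B B0 DB] /ulipschitz_ge0[KD KD0 DK]] := Dr i j; split.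
  exists (K1 * B) => p x Dx.
  by rewrite normrM ler_pM ?normr_ge0 ?DB //; apply/phi'B/FS.
exists (K1 * KD + K2 * K * B) => p x y Dx Dy.
have [Sx Sy] := (FS p x Dx, FS p y Dy).
have -> : phi' (F p x) * D i j p x - phi' (F p y) * D i j p y =
  phi' (F p x) * (D i j p x - D i j p y) + (phi' (F p x) - phi' (F p y)) * D i j p y.
  by ring.
apply: le_trans (ler_normD _ _) _; rewrite [leRHS]mulrDl !normrM; apply: lerD.
  by rewrite -mulrA ler_pM ?normr_ge0 ?phi'B ?DK.
rewrite (_ : K2 * K * B * _ = K2 * (K * frob (x - y)) * B); last by ring.
apply: ler_pM; rewrite ?normr_ge0 ?DB //.
by apply: le_trans (phi'K _ _ Sx Sy) _; rewrite ler_wpM2l ?FK.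
Qed.

Lemma smooth_lipgrad F : smooth F -> lipgrad F.
Proof. by move=> [D [FD [_ Dr]]]; exists D; split => // i j; case: (Dr i j). Qed.

Lemma lipgrad_cst (a : P -> R) : lipgrad (fun p _ => a p).
Proof. exact/smooth_lipgrad/smooth_cst. Qed.

Lemma lipgradD F G : lipgrad F -> lipgrad G -> lipgrad (fun p x => F p x + G p x).
Proof.
move=> [DF [FD DFK]] [DG [GD DGK]].
exists (fun i j p x => DF i j p x + DG i j p x).
by split=> [|i j]; [exact: has_partialsD | exact: ulipschitzD].
Qed.

Lemma lipgrad_sum (I : eqType) (r : seq I) (F : I -> fam) :
  (forall k, k \in r -> lipgrad (F k)) -> lipgrad (fun p x => \sum_(k <- r) F k p x).
Proof.
elim: r => [|k r IHr] Fg.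
  by apply: (fam_eq (F := fun _ _ => 0)) => [p x|]; rewrite ?big_nil //; exact: lipgrad_cst.
apply: (fam_eq (F := fun p x => F k p x + \sum_(k <- r) F k p x)) => [p x|].
  by rewrite big_cons.
apply: lipgradD; first by apply: Fg; rewrite mem_head.
by apply: IHr => k' k'r; apply: Fg; rewrite in_cons k'r orbT.
Qed.

Lemma lipgrad_mull (w : P -> R) F B :
  (forall p, `|w p| <= B) -> lipgrad F -> lipgrad (fun p x => w p * F p x).
Proof.
move=> wB [D [FD DK]]; exists (fun i j p x => w p * D i j p x); split.
  move=> p x i j Dx; have := has_partialsM (has_partials_cst w) FD p i j Dx.
  by rewrite mulr0 addr0; apply.
move=> i j; have [K K0 {}DK] := ulipschitz_ge0 (DK i j).
exists (B * K) => p x y Dx Dy; rewrite -mulrBr normrM -mulrA.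
by rewrite ler_pM ?normr_ge0 ?wB ?DK.
Qed.

Lemma lipgrad_sqr_sub (a : P -> R) k l : lipgrad (fun p x => (x k l - a p) ^+ 2).
Proof.
pose Dlin i j (p : P) (x : 'M[R]_(m, n)) : R := delta_mx i j k l + 0.
pose Dsqr i j p (x : 'M[R]_(m, n)) := (x k l - a p) * Dlin i j p x + (x k l - a p) * Dlin i j p x.
have linD : has_partials (fun p x => x k l + - a p) Dlin.
  exact: has_partialsD (has_partials_coord k l) (has_partials_cst _).
exists Dsqr; split=> [|i j].
  apply: (fam_eq (Q := has_partials^~ Dsqr) (F := fun p x => (x k l - a p) * (x k l - a p))).
    by move=> p x; rewrite expr2.
  exact: has_partialsM.
exists 2 => p x y _ _; rewrite /Dsqr /Dlin addr0.
have -> : (x k l - a p) * delta_mx i j k l + (x k l - a p) * delta_mx i j k l -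
    ((y k l - a p) * delta_mx i j k l + (y k l - a p) * delta_mx i j k l) =
    2 * ((x - y) k l * delta_mx i j k l) by rewrite !mxE; ring.
rewrite normrM ger0_norm // ler_wpM2l // normrM.
apply: le_trans (normr_mxE_le_frob (x - y) k l); rewrite ler_piMr ?normr_ge0 //.
by rewrite mxE; case: (_ && _); rewrite ?normr1 ?normr0.
Qed.

Lemma lipgrad_frob2_sub (Y : P -> 'M[R]_(m, n)) : lipgrad (fun p x => frob2 (Y p - x)).
Proof.
apply: (fam_eq (F := fun p x => \sum_(i < m) \sum_(j < n) (x i j - Y p i j) ^+ 2)).
  move=> p x; apply: eq_bigr => i _; apply: eq_bigr => j _.
  by rewrite !mxE -sqrrN opprB.
by apply: lipgrad_sum => i _; apply: lipgrad_sum => j _; exact: lipgrad_sqr_sub.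
Qed.

Lemma lipgrad_mgrad F : lipgrad F -> exists2 C, 0 < C &
  forall p x y, Dom x -> Dom y -> frob (mgrad (F p) x - mgrad (F p) y) <= C * frob (x - y).
Proof.
move=> [D [FD DK]].
have [K DKu] : exists K, forall ij : 'I_m * 'I_n, forall p x y, Dom x -> Dom y ->
    `|D ij.1 ij.2 p x - D ij.1 ij.2 p y| <= K * frob (x - y).
  apply: fin_uniform_bound => [ij K K' KK' ijK p x y Dx Dy|[i j]]; last exact: DK.
  by apply: le_trans (ijK p x y Dx Dy) _; rewrite ler_wpM2r ?frob_ge0.
have mgradE p z : Dom z -> mgrad (F p) z = \matrix_(i, j) D i j p z.
  by move=> Dz; apply/matrixP => i j; rewrite !mxE derive1E; case: (FD p z i j Dz).
exists ((m * n)%:R * `|K| + 1) => [|p x y Dx Dy].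
  by rewrite ltr_pwDr ?mulr_ge0.
rewrite mgradE // mgradE //.
apply: le_trans (frob_le_entrywise (c := `|K| * frob (x - y)) _ _) _.
- by rewrite mulr_ge0 ?frob_ge0.
- move=> i j; rewrite !mxE; apply: le_trans (DKu (i, j) p x y Dx Dy) _.
  by rewrite ler_wpM2r ?frob_ge0 ?ler_norm.
by rewrite mulrA mulrDl mul1r lerDl frob_ge0.
Qed.

Lemma bsmooth_comp_bounded (sigma : R -> R) (M0 M1 M2 : R) F :
  (forall x, derivable sigma x 1) ->
  (forall x, derivable (derive1 sigma) x 1) ->
  (forall x, `|sigma x| <= M0) ->
  (forall x, `|derive1 sigma x| <= M1) ->
  (forall x, `|derive1n 2 sigma x| <= M2) ->
  smooth F -> bsmooth (fun p x => sigma (F p x)).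
Proof.
move=> d1 d2 b0 b1 b2 Fs; split; last by exists M0.
have sigma_d (a : R) : is_derive a (1 : R) sigma (derive1 sigma a).
  by rewrite derive1E; exact: derivableP.
have sigma'_d (a : R) : is_derive a (1 : R) (derive1 sigma) (derive1n 2 sigma a).
  by rewrite /= derive1E; exact: derivableP.
have M10 : 0 <= M1 by apply: le_trans (b1 0).
have M20 : 0 <= M2 by apply: le_trans (b2 0).
apply: (smooth_comp (S := fun _ => True) (K0 := M1) (K1 := M1) (K2 := M2)) => // a b _ _;
  exact: (lipschitz_of_bounded_derive (S := fun _ => True)).
Qed.

Lemma bsmooth_expR F B : (forall p x, Dom x -> `|F p x| <= B) ->
  smooth F -> bsmooth (fun p x => expR (F p x)).
Proof.
move=> FB Fs; pose S a := - B <= a <= B.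
have FS p x : Dom x -> S (F p x) by rewrite /S -ler_norml; exact: FB.
have convS a b x : S a -> S b -> a <= x <= b -> S x.
  by rewrite /S => /andP[aS1 aS2] /andP[bS1 bS2] /andP[ax xb]; apply/andP; split; lra.
have expRB a : S a -> `|expR a| <= expR B.
  by move=> /andP[_ aB]; rewrite ger0_norm ?expR_ge0 // ler_expR.
have expR_lip a b : S a -> S b -> `|expR a - expR b| <= expR B * `|a - b|.
  by apply: (lipschitz_of_bounded_derive convS) => // x _; exact: is_derive_expR.
split; last by exists (expR B) => p x Dx; exact/expRB/FS.
have eB0 := expR_ge0 B.
by apply: (smooth_comp (S := S) (phi' := expR) (K0 := expR B) (K1 := expR B) (K2 := expR B)) Fs.
Qed.

Lemma bsmooth_ln F lo hi : 0 < lo -> (forall p x, Dom x -> lo <= F p x <= hi) ->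
  smooth F -> bsmooth (fun p x => ln (F p x)).
Proof.
move=> lo0 FS Fs; pose S a := lo <= a <= hi.
have convS a b x : S a -> S b -> a <= x <= b -> S x.
  by rewrite /S => /andP[aS1 aS2] /andP[bS1 bS2] /andP[ax xb]; apply/andP; split; lra.
have S_gt0 a : S a -> 0 < a by case/andP => loa _; lra.
have ln_d (a : R) : S a -> is_derive a (1 : R) (@ln R) a^-1.
  by move=> /S_gt0; exact: is_derive1_ln.
have invB a : S a -> `|a^-1| <= lo^-1.
  move=> Sa; have a0 := S_gt0 a Sa; rewrite ger0_norm; last by rewrite invr_ge0 ltW.
  by rewrite lef_pV2 ?posrE //; case/andP: Sa.
have inv_lip a b : S a -> S b -> `|a^-1 - b^-1| <= lo^-1 * lo^-1 * `|a - b|.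
  move=> Sa Sb; have [a0 b0] := (S_gt0 a Sa, S_gt0 b Sb).
  have -> : a^-1 - b^-1 = (b - a) * (a^-1 * b^-1) by field; rewrite !gt_eqF.
  by rewrite normrM distrC mulrC normrM ler_wpM2r ?ler_pM ?invB.
have ln_lip : forall a b, S a -> S b -> `|ln a - ln b| <= lo^-1 * `|a - b|.
  exact: lipschitz_of_bounded_derive convS ln_d invB.
have lo'0 : 0 <= lo^-1 by rewrite invr_ge0 ltW.
split; first exact: (smooth_comp lo'0 lo'0 (mulr_ge0 lo'0 lo'0) ln_d ln_lip invB inv_lip FS Fs).
exists (`|ln lo| + `|ln hi|) => p x Dx; have /andP[loF Fhi] := FS p x Dx.
have lnF : ln lo <= ln (F p x) <= ln hi by rewrite !ler_ln ?posrE // ?loF //; lra.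
move: lnF (ler_norm (ln hi)) (ler_norm (- ln lo)) (normr_ge0 (ln lo)) (normr_ge0 (ln hi)).
by rewrite normrN ler_norml; lra.
Qed.

Lemma bsmooth_xent J (z : 'I_J -> fam) (alpha : 'I_J -> R) : (0 < J)%N ->
  (forall j, bsmooth (z j)) ->
  bsmooth (fun p x =>
    - \sum_(j < J) alpha j * ln (expR (z j p x) / \sum_(k < J) expR (z k p x))).
Proof.
move=> J0 zs.
have [B zB] : exists B, forall j p x, Dom x -> `|z j p x| <= B.
  apply: fin_uniform_bound => [j K K' KK' zK p x Dx|j]; first exact: le_trans (zK p x Dx) KK'.
  by case: (zs j) => _.
have expz k : bsmooth (fun p x => expR (z k p x)) by exact: bsmooth_expR (zB k) (zs k).1.
have sum_gt0 p x : 0 < \sum_(k < J) expR (z k p x).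
  rewrite (bigD1 (Ordinal J0)) //= ltr_pwDl ?expR_gt0 //.
  by apply: sumr_ge0 => *; exact: expR_ge0.
have sum_bounds p x : Dom x ->
    J%:R * expR (- B) <= \sum_(k < J) expR (z k p x) <= J%:R * expR B.
  move=> Dx; have zkB k : - B <= z k p x <= B by rewrite -ler_norml zB.
  have sumE (c : R) : \sum_(k < J) c = J%:R * c by rewrite sumr_const card_ord mulr_natl.
  rewrite -(sumE (expR (- B))) -(sumE (expR B)); apply/andP.
  by split; apply: ler_sum => k _; rewrite ler_expR; case/andP: (zkB k).
have lnsum : bsmooth (fun p x => ln (\sum_(k < J) expR (z k p x))).
  apply: bsmooth_ln sum_bounds (bsmooth_sum (fun k _ => expz k)).1.
  by rewrite mulr_gt0 ?ltr0n ?expR_gt0.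
apply: (fam_eq (F := fun p x =>
    - \sum_(j < J) alpha j * (z j p x - ln (\sum_(k < J) expR (z k p x))))).
  move=> p x; congr (- _); apply: eq_bigr => j _.
  by rewrite ln_div ?posrE ?expR_gt0 // expRK.
apply/bsmoothN/bsmooth_sum => j _; apply: bsmoothM (bsmoothB (zs j) lnsum).
exact: (bsmooth_cst (a := fun _ => alpha j) (B := `|alpha j|)).
Qed.

Lemma bsmooth_Lvec_sq J N (Z : P -> 'M[R]_(m, n) -> 'M[R]_(J, N)) (A : 'M[R]_(J, N)) :
  (0 < J)%N -> (forall j k, bsmooth (fun p x => Z p x j k)) ->
  bsmooth (fun p x => Lvec_sq (Z p x) A).
Proof.
move=> J0 Zs; pose xentZ k p x :=
  - \sum_(j < J) A j k * ln (expR (Z p x j k) / \sum_(i < J) expR (Z p x i k)).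
apply: (fam_eq (F := fun p x => \sum_(k < N) xentZ k p x * xentZ k p x)).
  move=> p x; apply: eq_bigr => k _; rewrite expr2; congr (- _ * - _);
    apply: eq_bigr => j _; rewrite !mxE; congr (_ * ln (_ / _));
    by apply: eq_bigr => i _; rewrite mxE.
by apply: bsmooth_sum => k _; apply: bsmoothM; apply: bsmooth_xent => // j; exact: Zs.
Qed.

Lemma bsmooth_entry_cst q r (Y : P -> 'M[R]_(q, r)) i j B :
  (forall p, frob (Y p) <= B) -> bsmooth (fun p _ => Y p i j).
Proof.
move=> YB; apply: (bsmooth_cst (B := B)) => p.
exact: le_trans (normr_mxE_le_frob _ _ _) (YB p).
Qed.

Lemma bsmooth_frob2_affine q r N (W : P -> 'M[R]_(q, r))
    (Z : P -> 'M[R]_(m, n) -> 'M[R]_(r, N)) (b : P -> 'cV[R]_q) (C : P -> 'M[R]_(q, N)) B :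
  (forall p, frob (W p) <= B) -> (forall p, frob (b p) <= B) ->
  (forall p, frob (C p) <= B) -> (forall k j, bsmooth (fun p x => Z p x k j)) ->
  bsmooth (fun p x => frob2 (W p *m Z p x + bcast N (b p) - C p)).
Proof.
move=> WB bB CB Zs.
pose entry i j p x := \sum_(k < r) W p i k * Z p x k j + b p i 0 - C p i j.
apply: (fam_eq (F := fun p x => \sum_(i < q) \sum_(j < N) entry i j p x * entry i j p x)).
  by move=> p x; apply: eq_bigr => i _; apply: eq_bigr => j _; rewrite /bcast !mxE expr2.
apply: bsmooth_sum => i _; apply: bsmooth_sum => j _.
have entry_s : bsmooth (entry i j).
  apply: bsmoothB; first apply: bsmoothD.
  - apply: bsmooth_sum => k _; apply: bsmoothM (Zs k j).
    exact: bsmooth_entry_cst WB.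
  - exact: bsmooth_entry_cst bB.
  - exact: bsmooth_entry_cst CB.
exact: bsmoothM.
Qed.

Lemma bsmooth_frob2_cst q r (Y : P -> 'M[R]_(q, r)) B :
  (forall p, frob (Y p) <= B) -> bsmooth (fun p _ => frob2 (Y p)).
Proof. by move=> YB; apply: (bsmooth_cst (B := B * B)) => p; exact: frob2_le_sqr. Qed.

Lemma bsmooth_omega L d M J k (W1 : P -> 'M[R]_(M, d)) (Wm : P -> nat -> 'M[R]_M)
    (WL : P -> 'M[R]_(m, n) -> 'M[R]_(J, M)) B :
  (1 <= k)%N -> (forall p, frob (W1 p) <= B) ->
  (forall p j, (2 <= j <= L.-1)%N -> frob (Wm p j) <= B) ->
  bsmooth (fun p x => frob2 (WL p x)) ->
  bsmooth (fun p x => omega L (W1 p) (Wm p) (WL p x) k).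
Proof.
move=> k1 W1B WmB WLs; apply: bsmooth_prod => j; rewrite mem_index_iota => /andP[kj jL].
rewrite /Wn2; case: eqP => [_|/eqP j1]; first exact: bsmooth_frob2_cst W1B.
case: eqP => [_|/eqP jnL] //; apply: (bsmooth_frob2_cst (Y := Wm^~ j)) => p.
by apply: WmB; lia.
Qed.
End Families.

Lemma upd_eq T (c : nat -> T) l x : upd c l x l = x.
Proof. by rewrite /upd eqxx. Qed.

Lemma upd_neq T (c : nat -> T) l x k : k != l -> upd c l x k = c k.
Proof. by rewrite /upd => /negbTE ->. Qed.

Section Objective.
Variables (R : realType) (L d M J N : nat) (X : 'M[R]_(d, N)) (A : 'M[R]_(J, N)).
Variables (sigma : R -> R) (M0 M1 M2 Rad : R).
Hypotheses (L_ge2 : (2 <= L)%N) (J_gt0 : (0 < J)%N).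
Hypotheses (sigma_d : forall x, derivable sigma x 1)
  (sigma'_d : forall x, derivable (derive1 sigma) x 1)
  (sigmaB : forall x, `|sigma x| <= M0) (sigma'B : forall x, `|derive1 sigma x| <= M1)
  (sigma''B : forall x, `|derive1n 2 sigma x| <= M2).

Record fixed_WL := FixedWL {
  wW1 : 'M[R]_(M, d); wWm : nat -> 'M[R]_M; wb : nat -> 'cV[R]_M; wc : nat -> 'M[R]_(M, N);
  wW1_le : frob wW1 <= Rad;
  wWm_le : forall k, (2 <= k <= L.-1)%N -> frob (wWm k) <= Rad;
  wb_le : forall k, (1 <= k <= L.-1)%N -> frob (wb k) <= Rad;
  wc_le : forall k, (1 <= k <= L.-1)%N -> frob (wc k) <= Rad }.

Record fixed_c (l : nat) := FixedC {
  cW1 : 'M[R]_(M, d); cWm : nat -> 'M[R]_M; cWL : 'M[R]_(J, M);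
  cb : nat -> 'cV[R]_M; cc : nat -> 'M[R]_(M, N);
  cW1_le : frob cW1 <= Rad;
  cWm_le : forall k, (2 <= k <= L.-1)%N -> frob (cWm k) <= Rad;
  cWL_le : frob cWL <= Rad;
  cb_le : forall k, (1 <= k <= L.-1)%N -> frob (cb k) <= Rad;
  cc_le : forall k, (1 <= k <= L.-1)%N -> k != l -> frob (cc k) <= Rad }.

Local Notation in_ball := (fun x : 'M[R]_(J, M) => frob x <= Rad).
Local Notation everywhere := (fun _ : 'M[R]_(M, N) => True).

Lemma Sobj_WL_bsmooth :
  bsmooth in_ball (fun (p : fixed_WL) x => Sobj sigma L X A (wW1 p) (wWm p) x (wb p) (wc p)).
Proof.
have coord i j : bsmooth in_ball (fun (p : fixed_WL) x => x i j).
  exact: (bsmooth_coord _ i j (fun x (xB : frob x <= Rad) => xB)).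
have frob2_s : bsmooth in_ball (fun (p : fixed_WL) x => frob2 x).
  apply: (fam_eq (F := fun p x => \sum_i \sum_j x i j * x i j)) => [p x|].
    by apply: eq_bigr => i _; apply: eq_bigr => j _; rewrite expr2.
  by apply: bsmooth_sum => i _; apply: bsmooth_sum => j _; exact: bsmoothM.
have omega_s k : (1 <= k)%N ->
    bsmooth in_ball (fun (p : fixed_WL) x => omega L (wW1 p) (wWm p) x k).
  by move=> k1; apply: (bsmooth_omega _ (WL := fun _ x => x) (B := Rad)) => // p;
    [exact: wW1_le | exact: wWm_le].
apply: bsmoothD; first apply: bsmoothD.
- apply: bsmooth_Lvec_sq => // j k.
  apply: (fam_eq (F := fun p x => \sum_i x j i * sigma (wc p L.-1 i k))).
    by move=> p x; rewrite !mxE; apply: eq_bigr => i _; rewrite mxE.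
  apply: bsmooth_sum => i _; apply: bsmoothM (coord j i) _.
  exact: (bsmooth_cst _ (a := fun p => sigma (wc p L.-1 i k)) (B := M0)).
- apply: bsmooth_sum => k; rewrite mem_index_iota => /andP[k2 kL].
  apply: bsmoothM; first by apply: omega_s; lia.
  apply: (bsmooth_frob2_affine _ (Z := fun p _ => act sigma (wc p k.-1)) (B := Rad)).
  + by move=> p; apply: wWm_le; lia.
  + by move=> p; apply: wb_le; lia.
  + by move=> p; apply: wc_le; lia.
  + move=> i j; apply: (bsmooth_cst _ (a := fun p => act sigma (wc p k.-1) i j) (B := M0)).
    by move=> p; rewrite mxE.
- apply: bsmoothM; first exact: omega_s.
  apply: (bsmooth_frob2_affine _ (Z := fun _ _ => X) (B := Rad)).
  + exact: wW1_le.
  + by move=> p; apply: wb_le; lia.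
  + by move=> p; apply: wc_le; lia.
  + by move=> i j; exact: (bsmooth_cst _ (a := fun _ => X i j) (B := `|X i j|)).
Qed.

Section VaryingC.
Variable l : nat.
Hypothesis l_range : (1 <= l <= L.-1)%N.

Lemma omega_fixed_c_bsmooth k : (1 <= k)%N ->
  bsmooth everywhere (fun (p : fixed_c l) _ => omega L (cW1 p) (cWm p) (cWL p) k).
Proof.
move=> k1; apply: (bsmooth_omega _ (WL := fun p _ => cWL p) (B := Rad)) => //.
- exact: cW1_le.
- exact: cWm_le.
- by apply: bsmooth_frob2_cst; exact: cWL_le.
Qed.

Lemma sigma_coord_bsmooth i j : bsmooth everywhere (fun (p : fixed_c l) x => sigma (x i j)).
Proof.
exact: bsmooth_comp_bounded sigma_d sigma'_d sigmaB sigma'B sigma''B (smooth_coord _ _ _ _).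
Qed.

Lemma Lvec_term_c_lipgrad : lipgrad everywhere (fun (p : fixed_c l) x =>
  Lvec_sq (cWL p *m act sigma (upd (cc p) l x L.-1)) A).
Proof.
have [lL|lL] := eqVneq L.-1 l; last first.
  apply: (fam_eq (F := fun p _ => Lvec_sq (cWL p *m act sigma (cc p L.-1)) A)).
    by move=> p x; rewrite upd_neq.
  exact: lipgrad_cst.
apply: (fam_eq (F := fun p x => Lvec_sq (cWL p *m act sigma x) A)).
  by move=> p x; rewrite lL upd_eq.
suff [Fs _] : bsmooth everywhere (fun (p : fixed_c l) x => Lvec_sq (cWL p *m act sigma x) A).
  exact: smooth_lipgrad Fs.
apply: bsmooth_Lvec_sq => // j k.
apply: (fam_eq (F := fun p x => \sum_i cWL p j i * sigma (x i k))).
  by move=> p x; rewrite !mxE; apply: eq_bigr => i _; rewrite mxE.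
apply: bsmooth_sum => i _; apply: bsmoothM (sigma_coord_bsmooth i k).
exact: bsmooth_entry_cst (@cWL_le l).
Qed.

Lemma layer_term_c_lipgrad k : (2 <= k < L)%N ->
  lipgrad everywhere (fun (p : fixed_c l) x => omega L (cW1 p) (cWm p) (cWL p) k *
    frob2 (cWm p k *m act sigma (upd (cc p) l x k.-1) + bcast N (cb p k) - upd (cc p) l x k)).
Proof.
move=> /andP[k2 kL]; have [_ [B omegaB]] := omega_fixed_c_bsmooth (ltnW k2).
have [kl|kl] := eqVneq k l.
  apply: (lipgrad_mull (fun p => omegaB p 0 I)).
  apply: (fam_eq (F := fun p x =>
    frob2 ((cWm p k *m act sigma (cc p k.-1) + bcast N (cb p k)) - x))).
    by move=> p x; rewrite upd_neq ?kl ?upd_eq //; apply/eqP; lia.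
  exact: lipgrad_frob2_sub.
have [k1l|k1l] := eqVneq k.-1 l; last first.
  apply: (fam_eq (F := fun p _ => omega L (cW1 p) (cWm p) (cWL p) k *
    frob2 (cWm p k *m act sigma (cc p k.-1) + bcast N (cb p k) - cc p k))).
    by move=> p x; rewrite !upd_neq.
  exact: lipgrad_cst.
apply: (fam_eq (F := fun p x => omega L (cW1 p) (cWm p) (cWL p) k *
  frob2 (cWm p k *m act sigma x + bcast N (cb p k) - cc p k))).
  by move=> p x; rewrite [upd _ _ _ k]upd_neq // k1l upd_eq.
suff [Fs _] : bsmooth everywhere (fun (p : fixed_c l) x => omega L (cW1 p) (cWm p) (cWL p) k *
    frob2 (cWm p k *m act sigma x + bcast N (cb p k) - cc p k)).
  exact: smooth_lipgrad Fs.
apply: bsmoothM; first exact: omega_fixed_c_bsmooth (ltnW k2).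
apply: (bsmooth_frob2_affine _ (Z := fun _ x => act sigma x) (B := Rad)).
- by move=> p; apply: cWm_le; lia.
- by move=> p; apply: cb_le; lia.
- by move=> p; apply: cc_le => //; lia.
- move=> i j; apply: (fam_eq _ (sigma_coord_bsmooth i j)).
  by move=> p x; rewrite mxE.
Qed.

Lemma input_term_c_lipgrad :
  lipgrad everywhere (fun (p : fixed_c l) x => omega L (cW1 p) (cWm p) (cWL p) 1 *
    frob2 (cW1 p *m X + bcast N (cb p 1%N) - upd (cc p) l x 1%N)).
Proof.
have [l1|l1] := eqVneq l 1%N.
  have [_ [B omegaB]] := omega_fixed_c_bsmooth (leqnn 1).
  apply: (lipgrad_mull (fun p => omegaB p 0 I)).
  apply: (fam_eq (F := fun p x => frob2 ((cW1 p *m X + bcast N (cb p 1%N)) - x))).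
    by move=> p x; rewrite -l1 upd_eq.
  exact: lipgrad_frob2_sub.
apply: (fam_eq (F := fun p _ => omega L (cW1 p) (cWm p) (cWL p) 1 *
  frob2 (cW1 p *m X + bcast N (cb p 1%N) - cc p 1%N))).
  by move=> p x; rewrite upd_neq // eq_sym.
exact: lipgrad_cst.
Qed.

Lemma Sobj_c_lipgrad : lipgrad everywhere (fun (p : fixed_c l) x =>
  Sobj sigma L X A (cW1 p) (cWm p) (cWL p) (cb p) (upd (cc p) l x)).
Proof.
apply: lipgradD; first apply: lipgradD.
- exact: Lvec_term_c_lipgrad.
- by apply: lipgrad_sum => k; rewrite mem_index_iota => /layer_term_c_lipgrad.
- exact: input_term_c_lipgrad.
Qed.

Definition c_grad_lipschitz_with C := forall (p : fixed_c l) ch ct,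
  let S := fun x => Sobj sigma L X A (cW1 p) (cWm p) (cWL p) (cb p) (upd (cc p) l x) in
  frob (mgrad S ch - mgrad S ct) <= C * frob (ch - ct).

Lemma Sobj_c_mgrad_lipschitz : exists2 C, 0 < C & c_grad_lipschitz_with C.
Proof.
have [C C0 CK] := lipgrad_mgrad Sobj_c_lipgrad.
by exists C => // p ch ct; exact: CK.
Qed.

End VaryingC.

Lemma Sobj_WL_mgrad_lipschitz : exists2 C, 0 < C & forall (p : fixed_WL) Wh Wt,
  frob Wh <= Rad -> frob Wt <= Rad ->
  let S := fun x => Sobj sigma L X A (wW1 p) (wWm p) x (wb p) (wc p) in
  frob (mgrad S Wh - mgrad S Wt) <= C * frob (Wh - Wt).
Proof. exact: lipgrad_mgrad (smooth_lipgrad Sobj_WL_bsmooth.1). Qed.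

End Objective.

Theorem lemma3p3 (R : realType) (L d M J N : nat)
  (X : 'M[R]_(d, N)) (A : 'M[R]_(J, N))
  (sigma : R -> R) (M0 M1 M2 Rad : R) :
  (2 <= L)%N -> (2 <= J)%N -> onehot_cols A ->
  (forall x, derivable sigma x 1) ->
  (forall x, derivable (derive1 sigma) x 1) ->
  continuous (derive1n 2 sigma) ->
  0 < M0 -> 0 < M1 -> 0 < M2 ->
  (forall x, `|sigma x| <= M0) ->
  (forall x, `|derive1 sigma x| <= M1) ->
  (forall x, `|derive1n 2 sigma x| <= M2) ->
  0 < Rad ->
  exists C : nat -> R,
    (forall l, (1 <= l <= L)%N -> 0 < C l) /\
    (* (i) gradient in c_l, other parameters fixed with norm <= Rad *)
    (forall (l : nat) (W1 : 'M[R]_(M, d)) (Wm : nat -> 'M[R]_(M, M))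
            (WL : 'M[R]_(J, M)) (b : nat -> 'cV[R]_M) (c : nat -> 'M[R]_(M, N)),
       (1 <= l <= L.-1)%N ->
       frob W1 <= Rad ->
       (forall k, (2 <= k <= L.-1)%N -> frob (Wm k) <= Rad) ->
       frob WL <= Rad ->
       (forall k, (1 <= k <= L.-1)%N -> frob (b k) <= Rad) ->
       (forall k, (1 <= k <= L.-1)%N -> k != l -> frob (c k) <= Rad) ->
       forall ch ct : 'M[R]_(M, N),
         frob (mgrad (fun x => Sobj sigma L X A W1 Wm WL b (upd c l x)) ch
               - mgrad (fun x => Sobj sigma L X A W1 Wm WL b (upd c l x)) ct)
         <= C l * frob (ch - ct)) /\
    (* (ii) gradient in W_L, other parameters fixed with norm <= Rad *)
    (forall (W1 : 'M[R]_(M, d)) (Wm : nat -> 'M[R]_(M, M))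
            (b : nat -> 'cV[R]_M) (c : nat -> 'M[R]_(M, N)),
       frob W1 <= Rad ->
       (forall k, (2 <= k <= L.-1)%N -> frob (Wm k) <= Rad) ->
       (forall k, (1 <= k <= L.-1)%N -> frob (b k) <= Rad) ->
       (forall k, (1 <= k <= L.-1)%N -> frob (c k) <= Rad) ->
       forall Wh Wt : 'M[R]_(J, M),
         frob Wh <= Rad -> frob Wt <= Rad ->
         frob (mgrad (fun x => Sobj sigma L X A W1 Wm x b c) Wh
               - mgrad (fun x => Sobj sigma L X A W1 Wm x b c) Wt)
         <= C L * frob (Wh - Wt)).
Proof.
move=> L2 J2 _ d1 d2 _ _ _ _ b0 b1 b2 _; have J0 : (0 < J)%N by exact: ltnW.
have /choice[Cc Cc_spec] : forall l, exists C, 0 < C /\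
    ((1 <= l <= L.-1)%N -> c_grad_lipschitz_with L M X A sigma Rad l C).
  move=> l; have [lL|_] := boolP (1 <= l <= L.-1)%N; last by exists 1.
  have [C C0 CK] := Sobj_c_mgrad_lipschitz M X A Rad L2 J0 d1 d2 b0 b1 b2 lL.
  by exists C.
have [CL CL0 CLK] := Sobj_WL_mgrad_lipschitz M X A Rad L2 J0 b0.
exists (fun l => if l == L then CL else Cc l); split; [|split].
- by move=> l _; case: eqP => _ //; case: (Cc_spec l).
- move=> l W1 Wm WL b c lL W1R WmR WLR bR cR; rewrite ifN; last by apply/eqP; lia.
  exact: (Cc_spec l).2 lL (FixedC W1R WmR WLR bR cR).
- move=> W1 Wm b c W1R WmR bR cR; rewrite eqxx.
  exact: CLK (FixedWL W1R WmR bR cR).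
Qed.
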